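(* Let $G=(V,E)$ be a finite graph with a population function $p:V\to\mathbb{R}_{>0}$, let $k\ge 2$, $0<\epsilon<1$, and let $T=p(V)/k$, where $h(W)=\sum_{v\in W}h(v)$ for $W\subseteq V$ and any $h:V\to\mathbb{R}$. Let $P=\{P_1,\dots,P_k\}$ and $P'=\{P_1',\dots,P_k'\}$ be districting plans in $\mathcal{P}_{k,\epsilon}(G)$ with vertex sets $V_1,\dots,V_k$ and $V_1',\dots,V_k'$. Suppose $P'$ is a graph-preserving one-way perturbation of $P$: there are indices $i\ne j$ and a nonempty set $V_{ij}\subseteq V_i$ such that $V_i'=V_i\setminus V_{ij}$, $V_j'=V_j\cup V_{ij}$, $V_m'=V_m$ for all $m\ne i,j$, and the map $w_m\mapsto w_m'$ is an isomorphism between the district dual graphs $G_P$ and $G_{P'}$. Let $a,b:V\to\mathbb{R}$ satisfy $0\le a(v)\le b(v)\le p(v)$ and $b(v)>0$ for all $v\in V$, and for $W\subseteq V$ nonempty write $f(W)=a(W)/b(W)$; define filtration functions on the district dual graphs by $f(w_m)=f(V_m)$ and $f(w_m')=f(V_m')$. Let $\alpha>0$ satisfy $b(W)/p(W)\ge \alpha$ for $W=V_i,V_i',V_j,V_j'$. Let $\mathcal{D}_P$ and $\mathcal{D}_{P'}$ be the degree-$0$ persistence diagrams of the sublevel-set filtrations of $G_P$ and $G_{P'}$ induced by $f$. Then $$d_\infty(\mathcal{D}_P,\mathcal{D}_{P'})\le \frac{2\epsilon}{\alpha(1-\epsilon)}\max\Bigl(\bigl|f(V_{ij})-f(V_i)\bigr|,\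 \bigl|f(V_{ij})-f(V_j)\bigr|\Bigr).$$
   Context: Districting plans: $\mathcal{P}_{k,\epsilon}(G)$ is the set of partitions $P=\{P_1,\dots,P_k\}$ of $G$ into induced subgraphs $P_m=(V_m,E_m)$ on a vertex partition $V=V_1\sqcup\dots\sqcup V_k$, with each $P_m$ connected and $(1-\epsilon)T\le p(V_m)\le(1+\epsilon)T$. District dual graph $G_P$: vertices $w_1,\dots,w_k$ (one per district), with $w_m,w_l$ adjacent iff some edge of $E$ joins $V_m$ and $V_l$. Sublevel-set filtration and degree-0 persistence diagram: for a finite graph $H$ with vertex function $F$, for each $t$ let $H^t$ be the subgraph induced on vertices with $F\le t$ (edges appear once both endpoints are present); the diagram $\mathcal{D}_F$ is the multiset of (birth, death) pairs $(b,d)$, $d\in\mathbb{R}\cup\{\infty\}$, of connected components of $H^t$ as $t$ increases, with the elder rule (on merging, the younger component dies) and $d=\infty$ for components that never die; diagonal points may be ignored. Bottleneck distance $d_\infty$: infimum over partial bijections $\phi$ between the diagrams of the maximum of $\|x-\phi(x)\|_\infty$ over matched points and of the $\ell_\infty$ distance to the diagonal (i.e.\ $(d-b)/2$) over unmatched points, with $\infty-\infty=0$. *)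

From HB Require Import structures.
From mathcomp Require Import all_boot all_order all_algebra.
From mathcomp Require Import all_classical all_reals.
From mathcomp Require Import ereal.
Set Implicit Arguments. Unset Strict Implicit. Unset Printing Implicit Defensive.
Import Order.TTheory GRing.Theory Num.Theory.
Local Open Scope ring_scope.

Section Defs.
Variable R : realType.

Definition wsum (V : finType) (h : V -> R) (W : {set V}) : R := \sum_(v in W) h v.

Definition induced_connected (V : finType) (E : rel V) (A : {set V}) : Prop :=
  forall x y, x \in A -> y \in A ->
    connect [rel u w | [&& E u w, u \in A & w \in A]] x y.

Definition districting_plan (V : finType) (E : rel V) (p : V -> R) (k : nat)
    (eps : R) (Vm : 'I_k -> {set V}) : Prop :=
  let T := wsum p [set: V] / k%:R in
  (forall v : V, exists m : 'I_k, v \in Vm m) /\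
  (forall m l : 'I_k, m != l -> [disjoint Vm m & Vm l]) /\
  (forall m : 'I_k, induced_connected E (Vm m)) /\
  (forall m : 'I_k, (1 - eps) * T <= wsum p (Vm m) <= (1 + eps) * T).

Definition dual_adj (V : finType) (E : rel V) (k : nat) (Vm : 'I_k -> {set V})
    : rel 'I_k :=
  fun m l => (m != l) && [exists x, [exists y, [&& x \in Vm m, y \in Vm l & E x y]]].

Definition sublevel_rel (I : finType) (adj : rel I) (F : I -> R) (t : R) : rel I :=
  [rel u w | [&& adj u w, F u <= t & F w <= t]].

Definition older (I : finType) (F : I -> R) (u v : I) : bool :=
  (F u < F v) || ((F u == F v) && (enum_rank u < enum_rank v)%N).

(** Elder rule: the component born with vertex v (at time F v) dies at the
    first time t at which v is connected in H^t to an older vertex;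
    it never dies (+oo) otherwise. *)
Definition death (I : finType) (adj : rel I) (F : I -> R) (v : I) : \bar R :=
  ereal_inf [set (t%:E) | t in [set t : R | F v <= t /\
      exists u, older F u v /\ connect (sublevel_rel adj F t) u v]]%classic.

(** Degree-0 persistence diagram, as a finite family of (birth, death)
    points indexed by the vertices (points on the diagonal included;
    they do not affect the bottleneck distance). *)
Definition pdiagram (I : finType) (adj : rel I) (F : I -> R) : I -> R * \bar R :=
  fun v => (F v, death adj F v).

Definition edist (d d' : \bar R) : \bar R :=
  match d, d' with
  | EFin x, EFin y => `|x - y|%:E
  | +oo%E, +oo%E => 0%E
  | -oo%E, -oo%E => 0%E
  | _, _ => +oo%E
  end.

Definition linf_pt (x y : R * \bar R) : \bar R :=
  Order.max (`|x.1 - y.1|)%:E (edist x.2 y.2).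

Definition diag_dist (x : R * \bar R) : \bar R :=
  match x.2 with
  | EFin d => ((d - x.1) / 2)%:E
  | _ => +oo%E
  end.

Definition partial_bij (I1 I2 : finType) (mu : I1 -> option I2) : Prop :=
  forall i i' j, mu i = Some j -> mu i' = Some j -> i = i'.

Definition matching_cost (I1 I2 : finType) (D1 : I1 -> R * \bar R)
    (D2 : I2 -> R * \bar R) (mu : I1 -> option I2) : \bar R :=
  ereal_sup ([set 0%E] `|`
    [set c | exists i j, mu i = Some j /\ c = linf_pt (D1 i) (D2 j)] `|`
    [set c | exists i, mu i = None /\ c = diag_dist (D1 i)] `|`
    [set c | exists j, (forall i, mu i != Some j) /\ c = diag_dist (D2 j)])%classic.

Definition bottleneck (I1 I2 : finType) (D1 : I1 -> R * \bar R)
    (D2 : I2 -> R * \bar R) : \bar R :=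
  ereal_inf [set matching_cost D1 D2 mu | mu in [set mu | partial_bij mu]]%classic.

End Defs.

(* Since w_m |-> w'_m is an isomorphism of the dual graphs, both diagrams are
   sublevel diagrams of the same graph, for the vertex functions F m = f(V_m)
   and F' m = f(V'_m).  These differ only at i and j: f(V_i) is the b-weighted
   mean of f(V'_i) and f(V_ij), so f(V_i) - f(V'_i) equals
   b(V_ij)/b(V'_i) * (f(V_ij) - f(V_i)), and symmetrically at j.  The
   population bounds give b(V_ij) <= p(V_ij) <= 2 eps T and
   b(V'_i), b(V'_j) >= alpha (1 - eps) T, so |F - F'| is pointwise at most the
   right-hand side.
   It remains to see that degree-0 sublevel diagrams of a fixed graph are
   1-Lipschitz in the vertex function, for a matching that pairs vertices.
   If F and F' are compatible with the same tie-breaking order, every death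
   moves by at most |F - F'|.  Otherwise, interpolate linearly from F towards
   F' up to the first time two vertices change order: the order of F is still
   compatible with the interpolant there, and re-breaking its ties in the
   order of F' only permutes deaths among vertices of equal value.  Induction
   on the number of inversions between the two orders concludes. *)

From HB Require Import structures.
From mathcomp Require Import all_boot all_order all_algebra.
From mathcomp Require Import all_classical all_reals.
From mathcomp Require Import ereal.
From mathcomp Require Import fingroup perm.
From mathcomp Require Import lra ring.
Set Implicit Arguments. Unset Strict Implicit. Unset Printing Implicit Defensive.
Import Order.TTheory GRing.Theory Num.Theory.
Local Open Scope ring_scope.

Section Interpolation.
Variable R : realFieldType.

(* The time s at which a + s * (a' - a) and b + s * (b' - b) meet. *)
Definition crossing_time (a b a' b' : R) := (b - a) / ((b - a) + (a' - b')).

Lemma crossing_time_itv (a b a' b' : R) : a <= b -> b' <= a' ->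
  0 <= crossing_time a b a' b' <= 1.
Proof.
move=> le_ab le_b'a'; rewrite /crossing_time; apply/andP; split.
  by apply: divr_ge0; lra.
have [->|nz] := eqVneq ((b - a) + (a' - b')) 0; first by rewrite invr0 mulr0.
by rewrite ler_pdivrMr ?mul1r; [lra | rewrite lt_neqAle eq_sym nz /=; lra].
Qed.

Lemma interp_le (a b a' b' s : R) : 0 <= s <= 1 -> a <= b -> a' <= b' ->
  a + s * (a' - a) <= b + s * (b' - b).
Proof. by move=> /andP[s0 s1] *; nra. Qed.

Lemma interp_le_crossing (a b a' b' s : R) : a <= b -> b' <= a' -> 0 <= s ->
  s <= crossing_time a b a' b' -> a + s * (a' - a) <= b + s * (b' - b).
Proof.
rewrite /crossing_time => le_ab le_b'a' s0.
have [e|nz] := eqVneq ((b - a) + (a' - b')) 0.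
  have [-> ->] : b = a /\ b' = a' by split; lra.
  by [].
have pos : 0 < (b - a) + (a' - b') by rewrite lt_neqAle eq_sym nz /=; lra.
by rewrite ler_pdivlMr // => ?; nra.
Qed.

Lemma interp_crossing_eq (a b a' b' : R) : a <= b -> b' <= a' ->
  let s := crossing_time a b a' b' in a + s * (a' - a) = b + s * (b' - b).
Proof.
move=> le_ab le_b'a' s.
have [e|nz] := eqVneq ((b - a) + (a' - b')) 0.
  have [-> ->] : b = a /\ b' = a' by split; lra.
  by [].
have : s * ((b - a) + (a' - b')) = b - a by rewrite /s /crossing_time mulfVK.
lra.
Qed.

End Interpolation.

Section StrictTotalOrders.
Variables (R : realType) (I : finType).
Implicit Types (F G : I -> R) (lt : rel I).

Definition strict_total lt :=
  [/\ irreflexive lt, transitive lt & forall x y, x != y -> lt x y || lt y x].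

Definition compatible F lt := forall x y, F x < F y -> lt x y.

Definition lex G lt : rel I := fun x y => (G x < G y) || ((G x == G y) && lt x y).

Definition inversions lt1 lt2 : {set I * I} := [set xy | lt1 xy.1 xy.2 && lt2 xy.2 xy.1].

Lemma strict_total_asym lt x y : strict_total lt -> lt x y -> lt y x -> False.
Proof. by case=> irr tr _ lxy lyx; move: (tr _ _ _ lxy lyx); rewrite irr. Qed.

Lemma compatible_le F lt x y : strict_total lt -> compatible F lt -> lt x y -> F x <= F y.
Proof.
move=> lt_st F_lt lxy; rewrite leNgt; apply/negP => /F_lt lyx.
exact: strict_total_asym lt_st lxy lyx.
Qed.

Lemma lex_strict_total G lt : strict_total lt -> strict_total (lex G lt).
Proof.
case=> irr tr tot; split.
- by move=> x; rewrite /lex ltxx eqxx irr.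
- move=> y x z; rewrite /lex.
  case/orP=> [lt1|/andP[/eqP-> l1]]; case/orP=> [lt2|/andP[/eqP e2 l2]].
  + by rewrite (lt_trans lt1 lt2).
  + by rewrite -e2 lt1.
  + by rewrite lt2.
  + by rewrite e2 eqxx (tr _ _ _ l1 l2) orbT.
- by move=> x y nxy; rewrite /lex; case: ltgtP => //= _; apply: tot.
Qed.

Lemma lex_compatible G lt : compatible G (lex G lt).
Proof. by move=> x y GxGy; rewrite /lex GxGy. Qed.

Lemma older_strict_total F : strict_total (older F).
Proof.
apply: lex_strict_total; split.
- by move=> x; rewrite ltnn.
- by move=> y x z; apply: ltn_trans.
- move=> x y nxy; case: ltngtP => // /val_inj/enum_rank_inj exy.
  by rewrite exy eqxx in nxy.
Qed.

Lemma older_compatible F : compatible F (older F).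
Proof. exact: lex_compatible. Qed.

Lemma inversions0_eq lt1 lt2 : strict_total lt1 -> strict_total lt2 ->
  #|inversions lt1 lt2| = 0 -> lt1 = lt2.
Proof.
move=> [irr1 _ tot1] [irr2 _ tot2] inv0.
have noinv x y : lt1 x y -> lt2 y x -> False.
  move=> l1 l2; move/eqP: inv0; rewrite cards_eq0 => /eqP/setP/(_ (x, y)).
  by rewrite !inE l1 l2.
apply/funext => x; apply/funext => y; apply/idP/idP => lxy.
- have nxy : x != y by apply: contraTneq lxy => ->; rewrite irr1.
  by case/orP: (tot2 _ _ nxy) => // /(noinv _ _ lxy).
- have nxy : x != y by apply: contraTneq lxy => ->; rewrite irr2.
  by case/orP: (tot1 _ _ nxy) => // /noinv/(_ lxy).
Qed.

Lemma adjacent_inversion lt1 lt2 : strict_total lt1 -> strict_total lt2 ->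
  (0 < #|inversions lt1 lt2|)%N ->
  exists u v, [/\ lt1 u v, lt2 v u & forall w, ~~ (lt1 u w && lt1 w v)].
Proof.
move=> [irr1 tr1 _] [_ tr2 tot2] /card_gt0P[xy0 inv_xy0].
pose between (xy : I * I) := [set w | lt1 xy.1 w && lt1 w xy.2].
have [[u v] inv_uv uv_min] := arg_minnP (fun xy => #|between xy|)
  (P := fun xy => xy \in inversions lt1 lt2) inv_xy0.
move: (inv_uv); rewrite inE /= => /andP[l1 l2].
exists u, v; split => // w; apply/negP => /andP[uw wv].
have nuw : u != w by apply: contraTneq uw => ->; rewrite irr1.
have shorter xy : xy \in inversions lt1 lt2 -> between xy \proper between (u, v) -> False.
  by move=> /uv_min; rewrite leqNgt => /negP + /proper_card.
case/orP: (tot2 _ _ nuw) => [l2uw|l2wu].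
- apply: (shorter (w, v)); first by rewrite inE /= wv (tr2 _ _ _ l2 l2uw).
  apply/properP; split; last by exists w; rewrite !inE ?uw ?wv ?irr1.
  by apply/fintype.subsetP => z; rewrite !inE /= => /andP[wz ->]; rewrite (tr1 _ _ _ uw wz).
- apply: (shorter (u, w)); first by rewrite inE /= uw l2wu.
  apply/properP; split; last by exists w; rewrite !inE ?uw ?wv ?irr1 ?andbF.
  by apply/fintype.subsetP => z; rewrite !inE /= => /andP[-> zw]; rewrite (tr1 _ _ _ zw wv).
Qed.

Definition swap_rel lt (u v : I) : rel I := fun x y => lt (tperm u v x) (tperm u v y).

Lemma swap_rel_strict_total lt u v : strict_total lt -> strict_total (swap_rel lt u v).
Proof.
case=> irr tr tot; split.
- by move=> x; rewrite /swap_rel irr.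
- by move=> y x z; apply: tr.
- by move=> x y nxy; apply: tot; rewrite (inj_eq perm_inj).
Qed.

Lemma swap_rel_compatible F lt u v : F u = F v -> compatible F lt ->
  compatible F (swap_rel lt u v).
Proof.
move=> Fuv F_lt x y; have F_tperm z : F (tperm u v z) = F z.
  by case: tpermP => [->|->|//]; rewrite Fuv.
by rewrite -(F_tperm x) -(F_tperm y); apply: F_lt.
Qed.

Section AdjacentSwap.
Variables (lt : rel I) (u v : I).
Hypotheses (lt_st : strict_total lt) (lt_uv : lt u v)
  (uv_adjacent : forall w, ~~ (lt u w && lt w v)).

Lemma adjacent_neq : u != v.
Proof. by apply: contraTneq lt_uv => ->; case: lt_st => ->. Qed.

Lemma adjacent_ltL w : w != u -> w != v -> lt u w = lt v w.
Proof.
case: lt_st => _ tr tot wu wv; apply/idP/idP => [uw|]; last exact: tr.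
have /tot/orP[] // : v != w by rewrite eq_sym.
by move=> wv'; move: (uv_adjacent w); rewrite uw wv'.
Qed.

Lemma adjacent_ltR w : w != u -> w != v -> lt w u = lt w v.
Proof.
case: lt_st => _ tr tot wu wv; apply/idP/idP => [wu'|wv']; first exact: tr lt_uv.
have /tot/orP[] // := wu.
by move=> uw; move: (uv_adjacent w); rewrite uw wv'.
Qed.

Lemma swap_rel_agree x y : ~~ ((x == u) && (y == v)) -> ~~ ((x == v) && (y == u)) ->
  swap_rel lt u v x y = lt x y.
Proof.
have [irr _ _] := lt_st; have vu : v != u by rewrite eq_sym adjacent_neq.
rewrite /swap_rel; case: (tpermP u v x) => [->|->|/eqP xu /eqP xv];
  case: (tpermP u v y) => [->|->|/eqP yu /eqP yv];
  rewrite ?eqxx ?irr ?(negbTE adjacent_neq) ?(negbTE vu) ?(negbTE xu) ?(negbTE xv) //= => _ _.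
- by rewrite adjacent_ltL.
- by rewrite adjacent_ltL.
- by rewrite adjacent_ltR.
- by rewrite adjacent_ltR.
Qed.

Lemma adjacent_lt_v y : lt y v = lt y u || (y == u).
Proof.
have [->|yu] := eqVneq y u; first by rewrite lt_uv orbT.
have [->|yv] := eqVneq y v; last by rewrite orbF adjacent_ltR.
case: lt_st => irr _ _; rewrite irr orbF.
by apply/esym/negP => /(strict_total_asym lt_st lt_uv).
Qed.

Lemma swap_rel_u y : swap_rel lt u v y u = lt y u || (y == v).
Proof.
have [irr _ _] := lt_st; rewrite /swap_rel tpermL.
case: (tpermP u v y) => [->|->|/eqP yu /eqP yv].
- by rewrite !irr (negbTE adjacent_neq).
- by rewrite lt_uv eqxx orbT.
- by rewrite (negbTE yv) orbF adjacent_ltR.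
Qed.

Lemma swap_rel_v y : swap_rel lt u v y v = lt y u.
Proof.
have [irr _ _] := lt_st; rewrite /swap_rel tpermR.
case: (tpermP u v y) => [->|->|//].
- by rewrite irr; apply/negP => /(strict_total_asym lt_st lt_uv).
- by rewrite irr; apply/esym/negP => /(strict_total_asym lt_st lt_uv).
Qed.

Lemma inversions_swap_proper lt2 : strict_total lt2 -> lt2 v u ->
  inversions (swap_rel lt u v) lt2 \proper inversions lt lt2.
Proof.
move=> lt2_st lt2_vu; apply/properP; split.
- apply/fintype.subsetP => -[x y]; rewrite !inE /= => /andP[sxy lt2yx]; rewrite lt2yx andbT.
  have [/andP[/eqP ex /eqP ey]|nuv] := boolP ((x == u) && (y == v)).
    by move: sxy; rewrite ex ey /swap_rel tpermL tpermR => /(strict_total_asym lt_st lt_uv).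
  have [/andP[/eqP ex /eqP ey]|nvu] := boolP ((x == v) && (y == u)).
    by move: lt2yx; rewrite ex ey => /(strict_total_asym lt2_st lt2_vu).
  by rewrite -swap_rel_agree.
- exists (u, v); first by rewrite inE /= lt_uv lt2_vu.
  by case: lt_st => irr _ _; rewrite inE /= swap_rel_v irr.
Qed.

End AdjacentSwap.

End StrictTotalOrders.

Section UpClosedSets.
Variable R : realType.
Local Open Scope classical_set_scope.

Definition upclosed (X : set R) := forall s t, X s -> s <= t -> X t.

Lemma upclosed_total (X Y : set R) : upclosed X -> upclosed Y -> X `<=` Y \/ Y `<=` X.
Proof.
move=> upX upY; have [|nXY] := pselect (X `<=` Y); [by left | right].
have [a Xa nYa] : exists2 a, X a & ~ Y a.
  apply: contra_notP nXY => nex t Xt; apply: contra_notP nex => nYt; by exists t.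
move=> t Yt; have [ta|lt_at] := leP t a; first by case: nYa; exact: upY _ _ Yt ta.
exact: upX _ _ Xa (ltW lt_at).
Qed.

Lemma upclosed_merge_cases (X Y Z : set R) : upclosed X -> upclosed Y -> upclosed Z ->
  X `&` Z `<=` Y -> Y `&` Z `<=` X ->
  (X `|` Z = X /\ Y = Y `|` Z) \/ (Y = X /\ X `|` Z = Y `|` Z).
Proof.
move=> upX upY upZ XZ_Y YZ_X.
have [XsZ|ZsX] := upclosed_total upX upZ; last first.
  left; split; first exact: setUidl.
  by apply/esym/setUidl => t Zt; apply: XZ_Y; split => //; exact: ZsX.
have XsY t : X t -> Y t by move=> Xt; apply: XZ_Y; split => //; exact: XsZ.
have [YsZ|ZsY] := upclosed_total upY upZ; last first.
  left; split; last exact/esym/setUidl.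
  by apply: setUidl => t Zt; apply: YZ_X; split => //; exact: ZsY.
have eXY : Y = X by apply/seteqP; split => // t Yt; apply: YZ_X; split => //; exact: YsZ.
by right; split => //; rewrite eXY.
Qed.

End UpClosedSets.

Section ExtendedDistance.
Variable R : realType.
Local Open Scope classical_set_scope.

Lemma edist_trans (x y z : \bar R) (r1 r2 : R) :
  (edist x y <= r1%:E)%E -> (edist y z <= r2%:E)%E -> (edist x z <= (r1 + r2)%:E)%E.
Proof.
case: x => [x||]; case: y => [y||]; case: z => [z||] //=; rewrite ?lee_fin.
- by move=> ? ?; apply: le_trans (ler_distD y x z) _; apply: lerD.
all: by move=> ? ?; apply: addr_ge0.
Qed.

Lemma edist_ereal_inf_shift (S S' : set R) (b b' d : R) : 0 <= d ->
  lbound S b -> lbound S' b' ->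
  (forall t, S t -> S' (t + d)) -> (forall t, S' t -> S (t + d)) ->
  (edist (ereal_inf [set t%:E | t in S]) (ereal_inf [set t%:E | t in S']) <= d%:E)%E.
Proof.
move=> d0 lbS lbS' SS' S'S.
have [[t St]|S0] := pselect (exists t, S t); last first.
  have -> : S = set0 by apply/seteqP; split => // t St; apply: S0; exists t.
  have -> : S' = set0 by apply/seteqP; split => // t /S'S St; apply: S0; exists (t + d).
  by rewrite image_set0 ereal_inf0 /= lee_fin.
have S'0 : S' !=set0 by exists (t + d); exact: SS'.
rewrite !ereal_inf_EFin //=; [|by exists b' | by exists b | by exists t].
have inf_le (A B : set R) (c : R) : lbound A c -> B !=set0 ->
    (forall t, B t -> A (t + d)) -> inf A <= inf B + d.
  move=> lbA B0 BA; rewrite -lerBlDr; apply: lb_le_inf => // s Bs.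
  by rewrite lerBlDr; apply: ge_inf; [exists c | exact: BA].
have := inf_le _ _ _ lbS' (ex_intro _ t St) SS'; have := inf_le _ _ _ lbS S'0 S'S.
by rewrite lee_fin ler_norml; lra.
Qed.

End ExtendedDistance.

Section ElderRule.
Variables (R : realType) (I : finType) (adj : rel I).
Implicit Types (F : I -> R) (lt : rel I) (A : I -> Prop).
Local Open Scope classical_set_scope.

Definition merge_times F x A : set R :=
  [set t | F x <= t /\ exists y, A y /\ connect (sublevel_rel adj F t) y x].

(* [death adj F] is convertible to [elder_death F (older F)]; other tie-breaking
   orders are needed when interpolating between two vertex functions. *)
Definition elder_death F lt v : \bar R :=
  ereal_inf [set t%:E | t in merge_times F v (fun y => lt y v)].

Lemma merge_times_shift F F' (d : R) x A t : (forall v, F' v <= F v + d) ->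
  merge_times F x A t -> merge_times F' x A (t + d).
Proof.
move=> F'_le [Fx_le [y [Ay yx]]]; split; first by rewrite (le_trans (F'_le x)) ?lerD2r.
exists y; split => //; apply: connect_sub yx => u w /and3P[uw Fu Fw].
by apply/connect1/and3P; split; rewrite // (le_trans (F'_le _)) ?lerD2r.
Qed.

Lemma elder_death_shift F F' lt (d : R) : (forall v, `|F v - F' v| <= d) ->
  forall v, (edist (elder_death F lt v) (elder_death F' lt v) <= d%:E)%E.
Proof.
move=> dFF' v; have d0 : 0 <= d := le_trans (normr_ge0 _) (dFF' v).
have le_shift (G G' : I -> R) : (forall v, `|G v - G' v| <= d) -> forall v, G' v <= G v + d.
  by move=> dGG' u; move: (dGG' u); rewrite ler_norml => /andP[? ?]; lra.
apply: (@edist_ereal_inf_shift _ _ _ (F v) (F' v)) => //.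
- by move=> t [].
- by move=> t [].
- by move=> t; apply: merge_times_shift; exact: le_shift.
- by move=> t; apply: merge_times_shift; apply: le_shift => u; rewrite distrC.
Qed.

Lemma merge_times_ext F x A B : (forall y, A y <-> B y) ->
  merge_times F x A = merge_times F x B.
Proof.
move=> AB; apply/seteqP; split=> t [Fx [y [Ay yx]]]; split => //; exists y; split => //.
  exact/AB.
exact/AB.
Qed.

Lemma merge_timesU F x (A : pred I) z :
  merge_times F x (fun y => A y || (y == z)) =
  merge_times F x (fun y => A y) `|` merge_times F x (eq^~ z).
Proof.
apply/seteqP; split => t.
- by move=> [Fx [y [/orP[Ay|/eqP->] yx]]]; [left|right]; split => //; [exists y | exists z].
- case=> -[Fx [y [Ay yx]]]; split => //; exists y; split => //; apply/orP; first by left.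
  by right; apply/eqP.
Qed.

Lemma merge_times_upclosed F x A : upclosed (merge_times F x A).
Proof.
move=> s t [Fx [y [Ay yx]]] st; split; first exact: le_trans st.
exists y; split => //; apply: connect_sub yx => u w /and3P[uw Fu Fw].
by apply/connect1/and3P; split; rewrite // (le_trans _ st).
Qed.

Lemma elder_death_ext F lt lt' w : (forall y, lt y w = lt' y w) ->
  elder_death F lt w = elder_death F lt' w.
Proof.
move=> ltw; rewrite /elder_death (@merge_times_ext _ _ _ (fun y => lt' y w)) //.
by move=> y; rewrite ltw.
Qed.

Hypothesis adj_sym : symmetric adj.

Lemma sublevel_connect_sym F t : connect_sym (sublevel_rel adj F t).
Proof.
apply: sym_connect_sym => x y; rewrite /sublevel_rel /= adj_sym.
by case: (adj y x); case: (F x <= t); case: (F y <= t).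
Qed.

Section AdjacentSwapDeath.
Variables (F : I -> R) (lt : rel I) (u v : I).
Hypotheses (lt_st : strict_total lt) (lt_uv : lt u v)
  (uv_adjacent : forall w, ~~ (lt u w && lt w v)).

Lemma elder_death_swap_other w : w != u -> w != v ->
  elder_death F (swap_rel lt u v) w = elder_death F lt w.
Proof.
move=> wu wv; apply: elder_death_ext => y.
by apply: swap_rel_agree => //; rewrite ?(negbTE wu) ?(negbTE wv) andbF.
Qed.

Lemma elder_death_swap_uv : F u = F v ->
  (elder_death F (swap_rel lt u v) u = elder_death F lt u /\
   elder_death F (swap_rel lt u v) v = elder_death F lt v) \/
  (elder_death F (swap_rel lt u v) u = elder_death F lt v /\
   elder_death F (swap_rel lt u v) v = elder_death F lt u).
Proof.
move=> Fuv.
have e_v : (fun y => lt y v : Prop) = (fun y => lt y u || (y == u) : Prop).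
  by apply/funext => y; rewrite (adjacent_lt_v lt_st lt_uv uv_adjacent).
have e_su : (fun y => swap_rel lt u v y u : Prop) = (fun y => lt y u || (y == v) : Prop).
  by apply/funext => y; rewrite (swap_rel_u lt_st lt_uv uv_adjacent).
have e_sv : (fun y => swap_rel lt u v y v : Prop) = (fun y => lt y u : Prop).
  by apply/funext => y; rewrite (swap_rel_v lt_st lt_uv).
have eZ : merge_times F u (eq^~ v) = merge_times F v (eq^~ u).
  apply/seteqP; split=> t [Ft [_ [-> c]]].
    by split; [rewrite -Fuv | exists u; rewrite sublevel_connect_sym].
  by split; [rewrite Fuv | exists v; rewrite sublevel_connect_sym].
rewrite /elder_death e_v e_su e_sv !merge_timesU eZ.
set X := merge_times F u _; set Y := merge_times F v (fun y => lt y u).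
set Z := merge_times F v (eq^~ u).
have XZ_Y : X `&` Z `<=` Y.
  move=> t [[_ [y [ly yu]]] [Fvt [_ [-> uv]]]]; split => //.
  by exists y; split => //; exact: connect_trans yu uv.
have YZ_X : Y `&` Z `<=` X.
  move=> t [[Fvt [y [ly yv]]] [_ [_ [-> uv]]]]; split; first by rewrite Fuv.
  by exists y; split => //; apply: connect_trans yv _; rewrite sublevel_connect_sym.
(* Under lt, u dies at inf X and v at inf (Y `|` Z); after the swap, u dies at
   inf (X `|` Z) and v at inf Y. *)
have := @upclosed_merge_cases _ X Y Z (@merge_times_upclosed _ _ _)
  (@merge_times_upclosed _ _ _) (@merge_times_upclosed _ _ _) XZ_Y YZ_X.
by case=> [[-> <-]|[-> _]]; [left | right].
Qed.

End AdjacentSwapDeath.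

Lemma elder_death_perm F lt1 lt2 : strict_total lt1 -> strict_total lt2 ->
  compatible F lt1 -> compatible F lt2 ->
  exists2 sg : I -> I, injective sg &
    forall x, F (sg x) = F x /\ elder_death F lt2 (sg x) = elder_death F lt1 x.
Proof.
move=> + lt2_st + F_lt2; have [n] := ubnP #|inversions lt1 lt2|.
elim: n lt1 => [|n IH] lt1; rewrite ?ltn0 // ltnS => inv_le lt1_st F_lt1.
have [inv0|inv_gt0] := posnP #|inversions lt1 lt2|.
  by rewrite (inversions0_eq lt1_st lt2_st inv0); exists id.
have [u [v [lt1_uv lt2_vu uv_adj]]] := adjacent_inversion lt1_st lt2_st inv_gt0.
have Fuv : F u = F v.
  apply/eqP; rewrite eq_le (compatible_le lt1_st F_lt1 lt1_uv).
  exact: compatible_le lt2_st F_lt2 lt2_vu.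
have fewer := proper_card (inversions_swap_proper lt1_st lt1_uv uv_adj lt2_st lt2_vu).
have [sg sg_inj Hsg] := IH _ (leq_trans fewer inv_le)
  (swap_rel_strict_total u v lt1_st) (swap_rel_compatible Fuv F_lt1).
have [[du dv]|[du dv]] := elder_death_swap_uv lt1_st lt1_uv uv_adj Fuv.
- exists sg => // x; have [-> ->] := Hsg x; split => //.
  have [->|xu] := eqVneq x u => //; have [->|xv] := eqVneq x v => //.
  exact: elder_death_swap_other.
- exists (sg \o tperm u v); first exact: inj_comp sg_inj perm_inj.
  move=> x /=; have [-> ->] := Hsg (tperm u v x).
  split; first by case: tpermP => [->|->|].
  by case: tpermP => [->|->|/eqP xu /eqP xv] //; exact: elder_death_swap_other.
Qed.

End ElderRule.

Section Stability.
Variables (R : realType) (I : finType) (adj : rel I).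
Hypothesis adj_sym : symmetric adj.
Implicit Types (F : I -> R) (lt : rel I).

Definition interp F F' (s : R) : I -> R := fun x => F x + s * (F' x - F x).

Lemma first_crossing F F' lt lt' : strict_total lt -> strict_total lt' ->
  compatible F lt -> compatible F' lt' -> (0 < #|inversions lt lt'|)%N ->
  exists2 s, 0 <= s <= 1 & compatible (interp F F' s) lt /\
    inversions (lex (interp F F' s) lt') lt' \proper inversions lt lt'.
Proof.
move=> lt_st lt'_st F_lt F'_lt' /card_gt0P[xy0 inv_xy0].
pose cross (xy : I * I) := crossing_time (F xy.1) (F xy.2) (F' xy.1) (F' xy.2).
have [[x0 y0] inv_xy0' first] := arg_minP cross
  (P := fun xy => xy \in inversions lt lt') inv_xy0.
move: inv_xy0'; rewrite inE /= => /andP[lt_x0y0 lt'_y0x0].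
have Fxy := compatible_le lt_st F_lt lt_x0y0.
have F'yx := compatible_le lt'_st F'_lt' lt'_y0x0.
set s := cross (x0, y0).
have /andP[s0 s1] := crossing_time_itv Fxy F'yx.
exists s; first by rewrite s0 s1.
have [irr _ tot] := lt_st; have [_ _ tot'] := lt'_st.
have G_lt : compatible (interp F F' s) lt.
  move=> x y; apply: contraTT => nlt_xy; rewrite -leNgt.
  have [->|nxy] := eqVneq x y; first exact: lexx.
  have lt_yx : lt y x by move: (tot _ _ nxy); rewrite (negbTE nlt_xy).
  have Fyx := compatible_le lt_st F_lt lt_yx.
  have [lt'_yx'|nlt'_yx] := boolP (lt' y x).
    by apply: interp_le; rewrite ?s0 ?s1 // (compatible_le lt'_st F'_lt' lt'_yx').
  have lt'_xy : lt' x y by move: (tot' _ _ nxy); rewrite (negbTE nlt'_yx) orbF.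
  have inv_yx : (y, x) \in inversions lt lt' by rewrite inE /= lt_yx lt'_xy.
  apply: interp_le_crossing => //; first exact: (compatible_le lt'_st F'_lt' lt'_xy).
  exact: first (y, x) inv_yx.
split => //; apply/properP; split.
- apply/fintype.subsetP => -[x y]; rewrite !inE /= => /andP[lex_xy lt'_yx].
  rewrite lt'_yx andbT; case/orP: lex_xy => [/G_lt //|/andP[_ lt'_xy]].
  by case: (strict_total_asym lt'_st lt'_xy lt'_yx).
- exists (x0, y0); first by rewrite inE /= lt_x0y0 lt'_y0x0.
  have Gxy : interp F F' s x0 = interp F F' s y0 := interp_crossing_eq Fxy F'yx.
  rewrite inE /= /lex Gxy ltxx eqxx /=.
  by apply/negP => /andP[] /(strict_total_asym lt'_st lt'_y0x0).
Qed.

Lemma elder_death_stable F F' lt lt' (d : R) : strict_total lt -> strict_total lt' ->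
  compatible F lt -> compatible F' lt' -> (forall v, `|F v - F' v| <= d) ->
  exists2 sg : I -> I, injective sg & forall v, `|F v - F' (sg v)| <= d /\
    (edist (elder_death adj F lt v) (elder_death adj F' lt' (sg v)) <= d%:E)%E.
Proof.
move=> + lt'_st + F'_lt'; have [n] := ubnP #|inversions lt lt'|.
elim: n F lt d => [|n IH] F lt d; rewrite ?ltn0 // ltnS => inv_le lt_st F_lt dFF'.
have [inv0|inv_gt0] := posnP #|inversions lt lt'|.
  rewrite -(inversions0_eq lt_st lt'_st inv0); exists id => // v.
  by split; [exact: dFF' | exact: elder_death_shift].
have [s /andP[s0 s1] [G_lt fewer]] := first_crossing lt_st lt'_st F_lt F'_lt' inv_gt0.
set G := interp F F' s in G_lt fewer.
have dFG v : `|F v - G v| <= s * d.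
  have -> : F v - G v = s * (F v - F' v) by rewrite /G /interp; ring.
  by rewrite normrM ger0_norm // ler_wpM2l.
have dGF' v : `|G v - F' v| <= (1 - s) * d.
  have -> : G v - F' v = (1 - s) * (F v - F' v) by rewrite /G /interp; ring.
  by rewrite normrM ger0_norm ?subr_ge0 // ler_wpM2l ?subr_ge0.
have [sg1 sg1_inj Hsg1] := elder_death_perm adj_sym lt_st (lex_strict_total G lt'_st)
  G_lt (lex_compatible lt').
have [sg2 sg2_inj Hsg2] := IH G _ _ (leq_trans (proper_card fewer) inv_le)
  (lex_strict_total G lt'_st) (lex_compatible lt') dGF'.
exists (sg2 \o sg1) => [|v]; first exact: inj_comp.
have [G1 e1] := Hsg1 v; have [d2 e2] := Hsg2 (sg1 v); rewrite /=.
have -> : d = s * d + (1 - s) * d by ring.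
split.
- by apply: le_trans (ler_distD (G v) _ _) _; apply: lerD; [exact: dFG | rewrite -G1].
- by apply: edist_trans (elder_death_shift _ _ dFG v) _; rewrite -e1.
Qed.

End Stability.

Lemma bottleneck_le_perm (R : realType) (I : finType) (D1 D2 : I -> R * \bar R)
    (sg : I -> I) (c : R) :
  injective sg -> 0 <= c -> (forall i, (linf_pt (D1 i) (D2 (sg i)) <= c%:E)%E) ->
  (bottleneck D1 D2 <= c%:E)%E.
Proof.
move=> sg_inj c0 cost_le.
apply: (@le_trans _ _ (matching_cost D1 D2 (fun i => Some (sg i)))).
  by apply: ereal_inf_lbound; exists (fun i => Some (sg i)) => // i i' j [<-] [/sg_inj].
apply: ge_ereal_sup => x [[[->|[i [j [[<-] ->]]]]|[i []//]]|[j [unmatched _]]].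
- by rewrite lee_fin.
- exact: cost_le.
- have [sg_inv _ sgK] := injF_bij sg_inj.
  by move: (unmatched (sg_inv j)); rewrite sgK => /eqP.
Qed.

Section WeightedMeans.
Variables (R : realType) (V : finType).
Implicit Types (h a b : V -> R) (A X K : {set V}).

Lemma wsumU h A K : [disjoint A & K] -> wsum h (A :|: K) = wsum h A + wsum h K.
Proof. by move=> dAK; rewrite /wsum -bigU //; apply: eq_bigl => x; rewrite !inE. Qed.

Lemma wsum_le h h' A : (forall v, h v <= h' v) -> wsum h A <= wsum h' A.
Proof. by move=> hh'; apply: ler_sum. Qed.

Lemma wsum_gt0 h A x : (forall v, 0 < h v) -> x \in A -> 0 < wsum h A.
Proof.
move=> h_gt0 xA; rewrite /wsum (bigD1 x) //=; apply: ltr_pwDl => //.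
by apply: sumr_ge0 => v _; apply: ltW.
Qed.

Definition wratio a b A := wsum a A / wsum b A.

Lemma wratio_setU_add a b X K : [disjoint X & K] -> 0 < wsum b X -> 0 < wsum b K ->
  wratio a b (X :|: K) - wratio a b X =
  wsum b K / wsum b (X :|: K) * (wratio a b K - wratio a b X).
Proof.
move=> dXK bX bK; rewrite /wratio !wsumU //.
have bXK : wsum b X + wsum b K != 0 by rewrite lt0r_neq0 ?addr_gt0.
by field; rewrite bXK !lt0r_neq0.
Qed.

Lemma wratio_setU_remove a b X K : [disjoint X & K] -> 0 < wsum b X -> 0 < wsum b K ->
  wratio a b (X :|: K) - wratio a b X =
  wsum b K / wsum b X * (wratio a b K - wratio a b (X :|: K)).
Proof.
move=> dXK bX bK; rewrite /wratio !wsumU //.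
have bXK : wsum b X + wsum b K != 0 by rewrite lt0r_neq0 ?addr_gt0.
by field; rewrite bXK !lt0r_neq0.
Qed.

End WeightedMeans.

Lemma dual_adj_sym (V : finType) (E : rel V) (k : nat)
  (Vm : 'I_k -> {set V}) : symmetric E -> symmetric (dual_adj E Vm).
Proof.
move=> E_sym m l; rewrite /dual_adj eq_sym; congr andb.
apply/existsP/existsP => -[x /existsP[y /and3P[xm yl Exy]]].
  by exists y; apply/existsP; exists x; rewrite xm yl E_sym.
by exists y; apply/existsP; exists x; rewrite xm yl E_sym.
Qed.

Section OneWayMove.
Variables (R : realType) (V : finType) (E : rel V) (p a b : V -> R).
Variables (k : nat) (eps alpha : R) (Vm Vm' : 'I_k -> {set V}).
Variables (i j : 'I_k) (Vij : {set V}).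
Hypotheses (p_gt0 : forall v, 0 < p v) (k_gt0 : (0 < k)%N).
Hypotheses (eps_gt0 : 0 < eps) (eps_lt1 : eps < 1) (alpha_gt0 : 0 < alpha).
Hypotheses (hP : districting_plan E p eps Vm) (hP' : districting_plan E p eps Vm').
Hypotheses (neq_ij : i != j) (Vij_neq0 : Vij != finset.set0) (Vij_sub : Vij \subset Vm i).
Hypotheses (Vi' : Vm' i = Vm i :\: Vij) (Vj' : Vm' j = Vm j :|: Vij).
Hypotheses (Vm'_eq : forall m, m != i -> m != j -> Vm' m = Vm m).
Hypotheses (b_gt0 : forall v, 0 < b v) (b_le_p : forall v, b v <= p v).
Hypothesis b_share : forall W, W \in [:: Vm i; Vm' i; Vm j; Vm' j] ->
  alpha <= wsum b W / wsum p W.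

Let T := wsum p [set: V] / k%:R.
Let C := 2 * eps / (alpha * (1 - eps)).

Lemma ideal_population_gt0 : 0 < T.
Proof.
have [x _] := set0Pn _ Vij_neq0.
by apply: divr_gt0; [apply: (wsum_gt0 (x := x)) | rewrite ltr0n].
Qed.

Lemma Vi_split : Vm i = Vm' i :|: Vij.
Proof.
apply/setP => x; rewrite Vi' !inE; have [xVij|_] /= := boolP (x \in Vij).
  by rewrite (fintype.subsetP Vij_sub).
by rewrite orbF.
Qed.

Lemma Vi'_disjoint : [disjoint Vm' i & Vij].
Proof. by apply/pred0P => x /=; rewrite Vi' !inE; case: (x \in Vij); rewrite ?andbF. Qed.

Lemma Vj_disjoint : [disjoint Vm j & Vij].
Proof. by case: hP => _ [disj _]; apply: disjointWr Vij_sub _; rewrite disj // eq_sym. Qed.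

Lemma moved_population_le : wsum p Vij <= 2 * eps * T.
Proof.
have [_ [_ [_ bnd]]] := hP; have [_ [_ [_ bnd']]] := hP'.
have /andP[_ Vi_le] := bnd i; have /andP[Vi'_ge _] := bnd' i.
by move: Vi_le Vi'_ge; rewrite Vi_split wsumU ?Vi'_disjoint // -/T; lra.
Qed.

Lemma district_weight_ge W : W \in [:: Vm i; Vm' i; Vm j; Vm' j] ->
  alpha * ((1 - eps) * T) <= wsum b W.
Proof.
move=> W_in; have [_ [_ [_ bnd]]] := hP; have [_ [_ [_ bnd']]] := hP'.
have pW_ge : (1 - eps) * T <= wsum p W.
  by move: W_in; rewrite !inE => /or4P[] /eqP->; [case/andP: (bnd i) | case/andP: (bnd' i)
    | case/andP: (bnd j) | case/andP: (bnd' j)].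
have pW_gt0 : 0 < wsum p W.
  by apply: lt_le_trans pW_ge; rewrite mulr_gt0 ?ideal_population_gt0 ?subr_gt0.
have := b_share W_in; rewrite ler_pdivlMr //; apply: le_trans.
by rewrite ler_pM2l.
Qed.

Lemma district_weight_gt0 W : W \in [:: Vm i; Vm' i; Vm j; Vm' j] -> 0 < wsum b W.
Proof.
move=> /district_weight_ge; apply: lt_le_trans.
by rewrite mulr_gt0 // mulr_gt0 ?subr_gt0 ?ideal_population_gt0.
Qed.

Lemma moved_share_le W : W \in [:: Vm i; Vm' i; Vm j; Vm' j] ->
  wsum b Vij / wsum b W <= C.
Proof.
move=> W_in; have bW_gt0 := district_weight_gt0 W_in.
have bW_ge := district_weight_ge W_in.
have c_gt0 : 0 < alpha * (1 - eps) by rewrite mulr_gt0 ?subr_gt0.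
have bVij_le : wsum b Vij <= 2 * eps * T.
  exact: le_trans (wsum_le _ b_le_p) moved_population_le.
rewrite ler_pdivrMr // mulrAC ler_pdivlMr //.
apply: le_trans (ler_wpM2r (ltW c_gt0) bVij_le) _.
have -> : 2 * eps * T * (alpha * (1 - eps)) = 2 * eps * (alpha * ((1 - eps) * T)) by ring.
by apply: ler_wpM2l => //; rewrite mulr_ge0 ?ltW.
Qed.

Lemma moved_weight_gt0 : 0 < wsum b Vij.
Proof. by have [x xVij] := set0Pn _ Vij_neq0; exact: wsum_gt0 b_gt0 xVij. Qed.

Lemma source_shift_le :
  `|wratio a b (Vm i) - wratio a b (Vm' i)| <= C * `|wratio a b Vij - wratio a b (Vm i)|.
Proof.
have bVi'_gt0 : 0 < wsum b (Vm' i) by apply: district_weight_gt0; rewrite !inE eqxx orbT.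
rewrite Vi_split wratio_setU_remove ?Vi'_disjoint ?moved_weight_gt0 // -Vi_split.
have share_ge0 : 0 <= wsum b Vij / wsum b (Vm' i) by rewrite divr_ge0 ?ltW ?moved_weight_gt0.
rewrite normrM ger0_norm //.
by apply: ler_wpM2r => //; apply: moved_share_le; rewrite !inE eqxx orbT.
Qed.

Lemma target_shift_le :
  `|wratio a b (Vm j) - wratio a b (Vm' j)| <= C * `|wratio a b Vij - wratio a b (Vm j)|.
Proof.
have bVj_gt0 : 0 < wsum b (Vm j) by apply: district_weight_gt0; rewrite !inE eqxx !orbT.
rewrite distrC Vj' wratio_setU_add ?Vj_disjoint ?moved_weight_gt0 // -Vj'.
have bVj'_gt0 : 0 < wsum b (Vm' j) by apply: district_weight_gt0; rewrite !inE eqxx !orbT.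
have share_ge0 : 0 <= wsum b Vij / wsum b (Vm' j) by rewrite divr_ge0 ?ltW ?moved_weight_gt0.
rewrite normrM ger0_norm //.
by apply: ler_wpM2r => //; apply: moved_share_le; rewrite !inE eqxx !orbT.
Qed.

Lemma district_shift_le m : `|wratio a b (Vm m) - wratio a b (Vm' m)| <=
  C * Num.max `|wratio a b Vij - wratio a b (Vm i)| `|wratio a b Vij - wratio a b (Vm j)|.
Proof.
have C_ge0 : 0 <= C by rewrite divr_ge0 ?mulr_ge0 ?subr_ge0 // ltW.
have [->|mi] := eqVneq m i.
  by apply: le_trans source_shift_le _; apply: ler_wpM2l => //; rewrite le_max lexx.
have [->|mj] := eqVneq m j.
  by apply: le_trans target_shift_le _; apply: ler_wpM2l => //; rewrite le_max lexx orbT.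
by rewrite Vm'_eq // subrr normr0 mulr_ge0 // le_max normr_ge0.
Qed.

End OneWayMove.

Theorem mainTheorem2 (R : realType) (V : finType) (E : rel V)
  (hE : symmetric E) (p : V -> R) (hp : forall v, 0 < p v)
  (k : nat) (hk : (2 <= k)%N) (eps : R) (heps0 : 0 < eps) (heps1 : eps < 1)
  (Vm Vm' : 'I_k -> {set V})
  (hP : districting_plan E p eps Vm) (hP' : districting_plan E p eps Vm')
  (i j : 'I_k) (hij : i != j) (Vij : {set V})
  (hVij0 : Vij != finset.set0) (hVij : Vij \subset Vm i)
  (hVi' : Vm' i = Vm i :\: Vij) (hVj' : Vm' j = Vm j :|: Vij)
  (hVm' : forall m, m != i -> m != j -> Vm' m = Vm m)
  (hiso : forall m l, dual_adj E Vm m l = dual_adj E Vm' m l)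
  (a b : V -> R) (hab : forall v, 0 <= a v /\ a v <= b v /\ b v <= p v)
  (hb : forall v, 0 < b v)
  (alpha : R) (halpha : 0 < alpha)
  (hbalpha : forall W, W \in [:: Vm i; Vm' i; Vm j; Vm' j] ->
      alpha <= wsum b W / wsum p W) :
  let f := fun W : {set V} => wsum a W / wsum b W in
  (bottleneck (pdiagram (dual_adj E Vm) (fun m => f (Vm m)))
              (pdiagram (dual_adj E Vm') (fun m => f (Vm' m)))
   <= ((2 * eps) / (alpha * (1 - eps)) *
       Num.max `|f Vij - f (Vm i)| `|f Vij - f (Vm j)|)%:E)%E.
Proof.
cbv zeta; set f := fun W : {set V} => wsum a W / wsum b W.
set d := _ * Num.max _ _.
have b_le_p v : b v <= p v by have [_ []] := hab v.
have shift m : `|f (Vm m) - f (Vm' m)| <= d.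
  exact: (district_shift_le a hp (ltnW hk) heps0 heps1 halpha hP hP' hij hVij0 hVij
    hVi' hVj' hVm' hb b_le_p hbalpha).
have -> : dual_adj E Vm' = dual_adj E Vm.
  by apply/funext => m; apply/funext => l; rewrite hiso.
have [sg sg_inj Hsg] := elder_death_stable (dual_adj_sym Vm hE)
  (older_strict_total _) (older_strict_total _) (@older_compatible _ _ _)
  (@older_compatible _ _ _) shift.
apply: bottleneck_le_perm sg_inj (le_trans (normr_ge0 _) (shift i)) _ => m.
by have [F_le death_le] := Hsg m; rewrite /linf_pt ge_max lee_fin F_le.
Qed.
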